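(* Let $M$ be an $n$-dimensional path-connected manifold, $f:M\to M$ a diffeomorphism with a symmetry vector field $Y$ (i.e. $(Df(x))^{-1}Y(f(x))=Y(x)$) whose flow $\psi_t$ is complete and has a global Poincar\'e section $\Sigma$ relatively closed in $M$, with inclusion $\iota:\Sigma\hookrightarrow M$ and covering map $p(\sigma,\tau)=\psi_\tau(\sigma)$. Let $F(\sigma,\tau)=(k(\sigma),\tau+\omega(\sigma))$ be a lift of $f$ to $\Sigma\times\mathbb{R}$ ($f\circ p=p\circ F$) with $k$ a diffeomorphism of $\Sigma$. If $I:M\to\mathbb{R}$ is an invariant of $f$ ($I\circ f=I$) that is also an invariant of $\psi$ ($I\circ\psi_t=I$ for all $t$), then $\iota^*I=I\circ\iota$ is an invariant of $k$, i.e. $(I\circ\iota)\circ k=I\circ\iota$.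
   Context: A global Poincar\'e section of a complete flow $\psi$ is a relatively closed (any sequence in $\Sigma$ converging in $M$ converges in $\Sigma$), codimension-one submanifold transverse to the flow such that every orbit has both forward and backward transversal intersections with it. *)

(* topological abstraction of the smooth setting. *)
From HB Require Import structures.
From mathcomp Require Import all_boot all_order all_algebra.
From mathcomp Require Import all_classical all_reals all_analysis.
Set Implicit Arguments. Unset Strict Implicit. Unset Printing Implicit Defensive.
Import Order.TTheory GRing.Theory Num.Theory.
Import numFieldNormedType.Exports.
Local Open Scope classical_set_scope.
Local Open Scope ring_scope.

Definition path_connected_space (R : realType) (M : topologicalType) : Prop :=
  forall x y : M, exists gamma : R -> M,
    {within `[0, 1], continuous gamma} /\ gamma 0 = x /\ gamma 1 = y.

Definition homeo (M : topologicalType) (f : M -> M) : Prop :=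
  exists g : M -> M, cancel f g /\ cancel g f /\ continuous f /\ continuous g.

Definition homeo_on (M : topologicalType) (S : set M) (k : M -> M) : Prop :=
  (forall s, S s -> S (k s)) /\
  exists h : M -> M, (forall s, S s -> S (h s)) /\
    (forall s, S s -> h (k s) = s) /\ (forall s, S s -> k (h s) = s) /\
    {within S, continuous k} /\ {within S, continuous h}.

Definition complete_flow (R : realType) (M : topologicalType)
  (psi : R -> M -> M) : Prop :=
  continuous (fun p : R * M => psi p.1 p.2) /\
  (forall x, psi 0 x = x) /\
  (forall s t x, psi (s + t) x = psi s (psi t x)).

Definition relatively_closed (M : topologicalType) (S : set M) : Prop :=
  forall (u : nat -> M) (x : M), (forall n, S (u n)) -> u @ \oo --> x -> S x.

(* global Poincare section (transversality omitted) *)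
Definition global_poincare_section (R : realType) (M : topologicalType)
  (psi : R -> M -> M) (S : set M) : Prop :=
  relatively_closed S /\
  forall x : M, (exists t, 0 < t /\ S (psi t x)) /\ (exists t, t < 0 /\ S (psi t x)).

From HB Require Import structures.
From mathcomp Require Import all_boot all_order all_algebra.
From mathcomp Require Import all_classical all_reals all_analysis.
Import Order.TTheory GRing.Theory Num.Theory.
Import numFieldNormedType.Exports.
Local Open Scope classical_set_scope.
Local Open Scope ring_scope.

Lemma lift_section_map_invariant (T X : Type) (V : nmodType)
    (f k : T -> T) (psi : V -> T -> T) (omega : T -> V) (I : T -> X)
    (S : set T) :
  (forall s tau, S s -> f (psi tau s) = psi (tau + omega s) (k s)) ->
  (forall x, I (f x) = I x) ->
  (forall t x, I (psi t x) = I x) ->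
  forall s, S s -> I (k s) = I s.
Proof.
move=> lift fI psiI s Ss.
have lift0 : f (psi 0 s) = psi (omega s) (k s) by rewrite lift // add0r.
by rewrite -(psiI (omega s) (k s)) -lift0 fI psiI.
Qed.

Theorem lemma2p6 (R : realType) (M : topologicalType)
  (f : M -> M) (psi : R -> M -> M) (Sigma : set M)
  (k : M -> M) (omega : M -> R) (I : M -> R) :
  path_connected_space R M ->
  homeo f ->
  complete_flow psi ->
  (* Y is a symmetry of f: f commutes with its flow *)
  (forall t x, f (psi t x) = psi t (f x)) ->
  global_poincare_section psi Sigma ->
  homeo_on Sigma k ->
  {within Sigma, continuous omega} ->
  (* F(s,tau) = (k s, tau + omega s) is a lift of f: f o p = p o F *)
  (forall s tau, Sigma s -> f (psi tau s) = psi (tau + omega s) (k s)) ->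
  (forall x, I (f x) = I x) ->
  (forall t x, I (psi t x) = I x) ->
  forall s, Sigma s -> I (k s) = I s.
Proof.
(* The topological hypotheses only serve to make the lift F exist. *)
move=> _ _ _ _ _ _ _ lift fI psiI.
exact: lift_section_map_invariant lift fI psiI.
Qed.
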